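(* Let $n\ge 2$, $p\ge 2$, $\kappa\in\{0,1\}$ and $f^0,f^1\in\mathbb{R}^n$ with $f^0,f^1\ge 0$ and $\|f^0\|_1=\|f^1\|_1$. Consider the problem $$\min_{m\in\mathbb{R}^{(n-\kappa)p},\ f\in\mathbb{R}^{n(p-1)}} \|J(S_M m,\ S_F f+f_b^{+})\|_1 \quad\text{subject to}\quad D_M m+D_F f=f_b^{-}$$ (with $S_M,D_M,S_F,D_F,f_b^{\pm},J$ as in the context). If $(m_1,f_1)$ and $(m_2,f_2)$ are two minimizers, then $$\frac{(S_M m_1)_i}{(S_F f_1+f_b^{+})_i}=\frac{(S_M m_2)_i}{(S_F f_2+f_b^{+})_i}$$ for every index $i$ at which both denominators $(S_F f_1+f_b^{+})_i$ and $(S_F f_2+f_b^{+})_i$ are positive.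
   Context: Vectors $f\in\mathbb{R}^{n(p-1)}$, $m\in\mathbb{R}^{(n-\kappa)p}$ are discrete density and momentum reordered columnwise (time index outer); $\kappa=1$ is the Neumann and $\kappa=0$ the periodic spatial boundary case. $\otimes$ is the Kronecker product. Matrices: $S_p\in\mathbb{R}^{p-1,p}$ has $j$-th row $\tfrac12(e_j+e_{j+1})^{T}$; $D_p\in\mathbb{R}^{p-1,p}$ has $j$-th row $p(-e_j+e_{j+1})^{T}$. $S_n,D_n\in\mathbb{R}^{n-1,n}$ have $j$-th rows $\tfrac12(e_j+e_{j+1})^{T}$ and $n(-e_j+e_{j+1})^{T}$. $S_{n,per}\in\mathbb{R}^{n,n}$ has first row $\tfrac12(e_1+e_n)^T$ and $j$-th row $\tfrac12(e_{j-1}+e_j)^T$ ($j\ge2$); $D_{n,per}\in\mathbb{R}^{n,n}$ has first row $n(-e_1+e_n)^T$ and $j$-th row $n(e_{j-1}-e_j)^T$ ($j\ge 2$). $S_F:=S_p^{T}\otimes I_n$, $D_F:=-D_p^{T}\otimes I_n$; $S_M:=I_p\otimes S_n^{T}$, $D_M:=I_p\otimes(-D_n^{T})$ if $\kappa=1$, and $S_M:=I_p\otimes S_{n,per}^{T}$, $D_M:=I_p\otimes D_{n,per}^{T}$ if $\kappa=0$. $f_b^{+}:=\tfrac12((f^0)^T,0_{n(p-2)}^T,(f^1)^T)^T$, $f_b^{-}:=p((f^0)^T,0_{n(p-2)}^T,-(f^1)^T)^T$, both in $\mathbb{R}^{np}$. $J$ acts componentwise: $J(u,v)_i=u_i^2/(2v_i)$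 if $v_i>0$, $0$ if $(u_i,v_i)=(0,0)$, $+\infty$ otherwise, and $\|J(u,v)\|_1=\sum_i J(u,v)_i$. *)

From HB Require Import structures.
From mathcomp Require Import all_boot all_order all_algebra.
From mathcomp Require Import reals constructive_ereal.
Unset Printing Implicit Defensive.
Import Order.TTheory GRing.Theory Num.Theory.
Local Open Scope ring_scope.

Section Defs.
Variable R : realType.

(* Flattening of a pair index (a, b) : 'I_m * 'I_n into 'I_(m * n), with the
   FIRST component outer (index a * n + b); this is MathComp's own ordering,
   used by mxvec.  [unpair k] is the inverse. *)
Definition unpair {m n : nat} (k : 'I_(m * n)) : 'I_m * 'I_n :=
  enum_val (cast_ord (esym (mxvec_cast m n)) k).

Definition kron {m1 n1 m2 n2 : nat} (A : 'M[R]_(m1, n1)) (B : 'M[R]_(m2, n2))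
  : 'M[R]_(m1 * m2, n1 * n2) :=
  \matrix_(i, j) (A (unpair i).1 (unpair j).1 * B (unpair i).2 (unpair j).2).

Definition S_e (r c : nat) : R := ((c == r)%:R + (c == r.+1)%:R) / 2.
Definition D_e (k r c : nat) : R := k%:R * (- (c == r)%:R + (c == r.+1)%:R).
(* periodic: row 0 is 1/2(e_1 + e_n) resp. n(-e_1 + e_n); row j >= 1 is
   1/2(e_{j-1}+e_j) resp. n(e_{j-1} - e_j)  (paper's 1-based, here 0-based). *)
Definition Sper_e (n r c : nat) : R :=
  if r == 0%N then ((c == 0%N)%:R + (c == n.-1)%:R) / 2
  else ((c == r.-1)%:R + (c == r)%:R) / 2.
Definition Dper_e (n r c : nat) : R :=
  if r == 0%N then n%:R * (- (c == 0%N)%:R + (c == n.-1)%:R)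
  else n%:R * ((c == r.-1)%:R - (c == r)%:R).

Definition S_p (p : nat) : 'M[R]_(p.-1, p) := \matrix_(j, k) S_e j k.
Definition D_p (p : nat) : 'M[R]_(p.-1, p) := \matrix_(j, k) D_e p j k.
Definition S_n (n : nat) : 'M[R]_(n.-1, n) := \matrix_(j, k) S_e j k.
Definition D_n (n : nat) : 'M[R]_(n.-1, n) := \matrix_(j, k) D_e n j k.
Definition S_nper (n : nat) : 'M[R]_(n, n) := \matrix_(j, k) Sper_e n j k.
Definition D_nper (n : nat) : 'M[R]_(n, n) := \matrix_(j, k) Dper_e n j k.

(* Spatial blocks of S_M, D_M: for kappa = 1 these are S_n^T and -D_n^T
   (entries written out, since n - kappa is not syntactically n.-1);
   for kappa = 0 they are S_{n,per}^T and D_{n,per}^T. *)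
Definition SMblock (n kappa : nat) : 'M[R]_(n, n - kappa) :=
  \matrix_(i, j) (if kappa == 1%N then S_e j i else Sper_e n j i).
Definition DMblock (n kappa : nat) : 'M[R]_(n, n - kappa) :=
  \matrix_(i, j) (if kappa == 1%N then - D_e n j i else Dper_e n j i).

Definition S_F (n p : nat) : 'M[R]_(p * n, p.-1 * n) := kron (S_p p)^T (1%:M : 'M[R]_n).
Definition D_F (n p : nat) : 'M[R]_(p * n, p.-1 * n) := kron (- (D_p p)^T) (1%:M : 'M[R]_n).
Definition S_M (n p kappa : nat) : 'M[R]_(p * n, p * (n - kappa)) :=
  kron (1%:M : 'M[R]_p) (SMblock n kappa).
Definition D_M (n p kappa : nat) : 'M[R]_(p * n, p * (n - kappa)) :=
  kron (1%:M : 'M[R]_p) (DMblock n kappa).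

(* f_b^+ = 1/2 (f0; 0; ...; 0; f1),  f_b^- = p (f0; 0; ...; 0; -f1),
   time blocks outer (block t occupies indices t*n .. t*n+n-1). *)
Definition fb_plus (n p : nat) (f0 f1 : 'I_n -> R) : 'cV[R]_(p * n) :=
  (mxvec (\matrix_(t < p, s < n)
     (if t == 0%N :> nat then f0 s / 2 else if t == p.-1 :> nat then f1 s / 2 else 0)))^T.
Definition fb_minus (n p : nat) (f0 f1 : 'I_n -> R) : 'cV[R]_(p * n) :=
  (mxvec (\matrix_(t < p, s < n)
     (if t == 0%N :> nat then p%:R * f0 s
      else if t == p.-1 :> nat then p%:R * (- f1 s) else 0)))^T.

Definition Jfun (u v : R) : \bar R :=
  if 0 < v then ((u ^+ 2) / (2 * v))%:E
  else if (u == 0) && (v == 0) then 0%E else +oo%E.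

Definition objective (n p kappa : nat) (f0 f1 : 'I_n -> R)
  (m : 'cV[R]_(p * (n - kappa))) (f : 'cV[R]_(p.-1 * n)) : \bar R :=
  (\sum_(i < p * n)
     Jfun ((S_M n p kappa *m m) i ord0) ((S_F n p *m f + fb_plus n p f0 f1) i ord0))%E.

Definition feasible (n p kappa : nat) (f0 f1 : 'I_n -> R)
  (m : 'cV[R]_(p * (n - kappa))) (f : 'cV[R]_(p.-1 * n)) : Prop :=
  D_M n p kappa *m m + D_F n p *m f = fb_minus n p f0 f1.

Definition is_minimizer (n p kappa : nat) (f0 f1 : 'I_n -> R)
  (m : 'cV[R]_(p * (n - kappa))) (f : 'cV[R]_(p.-1 * n)) : Prop :=
  feasible n p kappa f0 f1 m f /\
  forall m' f', feasible n p kappa f0 f1 m' f' ->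
    (objective n p kappa f0 f1 m f <= objective n p kappa f0 f1 m' f')%E.

End Defs.

From mathcomp Require Import all_boot all_order all_algebra.
From mathcomp Require Import reals constructive_ereal.
From mathcomp Require Import ring lra zify.

(* The integrand J(u, v) = u^2 / (2 v) is jointly convex, and on v > 0 its
   midpoint inequality is strict unless u1 / v1 = u2 / v2: the Jensen gap is
   (u1 v2 - u2 v1)^2 / (4 v1 v2 (v1 + v2)).  The constraint is affine, so the
   midpoint of two minimizers is feasible, and a differing ratio at one index
   would make its objective strictly smaller than the common minimum.  This
   needs the minimum to be finite: a finite feasible point is given by the
   spatially uniform density carrying the common mass, whose time derivative is
   balanced by a momentum built from spatial prefix sums; mass conservation
   makes every time slice of the residual mean-free, which is exactly what the
   discrete divergence needs to be inverted. *)

Set Implicit Arguments.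
Unset Strict Implicit.
Unset Printing Implicit Defensive.

Import Order.TTheory GRing.Theory Num.Theory.
Local Open Scope ring_scope.

Section Perspective.
Variable R : realType.

Definition Jdom (u v : R) : bool := (0 < v) || ((u == 0) && (v == 0)).
Definition Jval (u v : R) : R := if 0 < v then u ^+ 2 / (2 * v) else 0.

Lemma Jval_ge0 u v : 0 <= Jval u v.
Proof.
rewrite /Jval; case: ifP => // v_gt0.
by rewrite divr_ge0 ?sqr_ge0 // mulr_ge0 // ltW.
Qed.

Lemma JfunE u v : Jfun R u v = if Jdom u v then (Jval u v)%:E else +oo%E.
Proof. by rewrite /Jfun /Jdom /Jval; case: ifP. Qed.

Lemma Jfun_ge0 u v : (0 <= Jfun R u v)%E.
Proof. by rewrite JfunE; case: ifP => _; rewrite ?leey // lee_fin Jval_ge0. Qed.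

Lemma sum_Jfun_dom N (u v : 'I_N -> R) : (forall k, Jdom (u k) (v k)) ->
  (\sum_k Jfun R (u k) (v k) = (\sum_k Jval (u k) (v k))%:E)%E.
Proof. by move=> dom; rewrite -sumEFin; apply: eq_bigr => k _; rewrite JfunE dom. Qed.

Lemma sum_Jfun_oo N (u v : 'I_N -> R) i : ~~ Jdom (u i) (v i) ->
  (\sum_k Jfun R (u k) (v k) = +oo)%E.
Proof.
move=> Ni; rewrite (bigD1 i) //= JfunE (negbTE Ni) addye //.
have : (0 <= \sum_(k < N | k != i) Jfun R (u k) (v k))%E.
  by apply: sume_ge0 => k _; exact: Jfun_ge0.
by case: (\sum_(k < N | k != i) _)%E.
Qed.

Lemma Jdom_midpoint u1 v1 u2 v2 : Jdom u1 v1 -> Jdom u2 v2 ->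
  Jdom ((u1 + u2) / 2) ((v1 + v2) / 2).
Proof.
rewrite /Jdom => /orP[v1_gt0|/andP[/eqP-> /eqP->]] /orP[v2_gt0|/andP[/eqP-> /eqP->]];
  apply/orP; (by left; lra) || by right; rewrite !addr0 mul0r eqxx.
Qed.

Lemma Jval_midpoint_gap u1 v1 u2 v2 : 0 < v1 -> 0 < v2 ->
  (Jval u1 v1 + Jval u2 v2) / 2 - Jval ((u1 + u2) / 2) ((v1 + v2) / 2) =
  (u1 * v2 - u2 * v1) ^+ 2 / (4 * v1 * v2 * (v1 + v2)).
Proof.
move=> v1_gt0 v2_gt0; rewrite /Jval v1_gt0 v2_gt0 ifT; last by lra.
have v1_neq0 : v1 != 0 by rewrite gt_eqF.
have v2_neq0 : v2 != 0 by rewrite gt_eqF.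
have v12_neq0 : v1 + v2 != 0 by rewrite gt_eqF // addr_gt0.
by field; rewrite ?mulf_neq0 //; lra.
Qed.

Lemma Jval_midpoint_le u1 v1 u2 v2 : Jdom u1 v1 -> Jdom u2 v2 ->
  Jval ((u1 + u2) / 2) ((v1 + v2) / 2) <= (Jval u1 v1 + Jval u2 v2) / 2.
Proof.
move=> /orP[v1_gt0|/andP[/eqP-> /eqP->]] /orP[v2_gt0|/andP[/eqP-> /eqP->]].
- rewrite -subr_ge0 Jval_midpoint_gap // divr_ge0 ?sqr_ge0 // ltW //.
  by rewrite !mulr_gt0 ?addr_gt0.
- rewrite /Jval v1_gt0 ltxx !addr0 ifT; last by lra.
  by rewrite le_eqVlt; apply/orP; left; apply/eqP; field; lra.
- rewrite /Jval v2_gt0 ltxx !add0r ifT; last by lra.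
  by rewrite le_eqVlt; apply/orP; left; apply/eqP; field; lra.
- by rewrite /Jval !addr0 mul0r ltxx; lra.
Qed.

Lemma Jval_midpoint_lt u1 v1 u2 v2 : 0 < v1 -> 0 < v2 -> u1 / v1 != u2 / v2 ->
  Jval ((u1 + u2) / 2) ((v1 + v2) / 2) < (Jval u1 v1 + Jval u2 v2) / 2.
Proof.
move=> v1_gt0 v2_gt0; rewrite eqr_div ?lt0r_neq0 // => neq.
rewrite -subr_gt0 Jval_midpoint_gap // divr_gt0 //.
  by rewrite exprn_even_gt0 //= subr_eq0.
by rewrite !mulr_gt0 ?addr_gt0.
Qed.

Lemma sum_Jval_midpoint_lt N (u1 v1 u2 v2 : 'I_N -> R) i :
  (forall k, Jdom (u1 k) (v1 k)) -> (forall k, Jdom (u2 k) (v2 k)) ->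
  0 < v1 i -> 0 < v2 i -> u1 i / v1 i != u2 i / v2 i ->
  \sum_k Jval ((u1 k + u2 k) / 2) ((v1 k + v2 k) / 2) <
  (\sum_k Jval (u1 k) (v1 k) + \sum_k Jval (u2 k) (v2 k)) / 2.
Proof.
move=> dom1 dom2 v1_gt0 v2_gt0 neq.
rewrite -big_split mulr_suml /= (bigD1 i) // [X in _ < X](bigD1 i) //=.
rewrite ltr_leD ?Jval_midpoint_lt //.
by apply: ler_sum => k _; exact: Jval_midpoint_le.
Qed.

End Perspective.

Section IndexSums.
Variable R : realType.

Lemma sum_nat_eq_mul N (a : nat) (g : nat -> R) :
  \sum_(j < N) ((a == j)%:R * g j) = (a < N)%N%:R * g a.
Proof.
elim: N => [|N IH]; first by rewrite big_ord0 ltn0 mul0r.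
rewrite big_ord_recr /= IH; case: (ltngtP a N) => [aN|Na|->].
- by rewrite (ltn_trans aN) // mul0r addr0.
- by rewrite ltnS leqNgt Na !mul0r addr0.
- by rewrite ltnSn mul0r add0r.
Qed.

Lemma sum_nat_eqS_mul N (a : nat) (g : nat -> R) :
  \sum_(j < N) ((a == j.+1)%:R * g j) = ((0 < a)%N && (a.-1 < N)%N)%:R * g a.-1.
Proof.
case: a => [|a] /=; first by rewrite big1 ?mul0r // => j _; rewrite mul0r.
by rewrite -(sum_nat_eq_mul N a g); apply: eq_bigr => j _; rewrite eqSS.
Qed.

Lemma sum_eq_mul (T : finType) (x : T) (G : T -> R) :
  \sum_i ((x == i)%:R * G i) = G x.
Proof.
rewrite (bigD1 x) //= eqxx mul1r big1 ?addr0 // => i /negbTE.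
by rewrite eq_sym => ->; rewrite mul0r.
Qed.

Lemma sum_mxvec_index a b (G : 'I_(a * b) -> R) :
  \sum_k G k = \sum_(t < a) \sum_(s < b) G (mxvec_index t s).
Proof.
rewrite pair_big /= (reindex (uncurry (@mxvec_index a b))) /=.
  by apply: eq_bigr => [[t s]].
exact: curry_mxvec_bij.
Qed.

Lemma unpair_mxvec_index m n (t : 'I_m) (s : 'I_n) :
  unpair (mxvec_index t s) = (t, s).
Proof. by rewrite /unpair /mxvec_index cast_ordK enum_rankK. Qed.

Lemma mul_kron_mxE m1 n1 m2 n2 (A : 'M[R]_(m1, n1)) (B : 'M[R]_(m2, n2))
    (x : 'cV[R]_(n1 * n2)) t s :
  (kron R A B *m x) (mxvec_index t s) 0 =
  \sum_(t' < n1) \sum_(s' < n2) A t t' * B s s' * x (mxvec_index t' s') 0.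
Proof.
rewrite mxE sum_mxvec_index; apply: eq_bigr => t' _; apply: eq_bigr => s' _.
by rewrite mxE !unpair_mxvec_index.
Qed.

End IndexSums.

Section PrefixSums.
Variables (R : realType) (n : nat).
Implicit Type w : 'I_n -> R.

Definition prefix_sum w (j : nat) : R := \sum_(k < n | (k < j)%N) w k.

Lemma prefix_sum0 w : prefix_sum w 0 = 0.
Proof. by rewrite /prefix_sum big_pred0 // => k; rewrite ltn0. Qed.

Lemma prefix_sumS w (s : 'I_n) : prefix_sum w s.+1 = prefix_sum w s + w s.
Proof.
rewrite /prefix_sum (bigD1 s) 1?addrC //=; congr (_ + _); apply: eq_bigl => k.
by rewrite ltnS ltn_neqAle andbC.
Qed.

Lemma prefix_sum_all w : prefix_sum w n = \sum_i w i.
Proof. by apply: eq_bigl => k; rewrite ltn_ord. Qed.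

Lemma sum_diff_prefix_sum w (s : 'I_n) : \sum_i w i = 0 ->
  \sum_(j < n.-1) ((s == j :> nat)%:R * prefix_sum w j.+1
                  - (s == j.+1 :> nat)%:R * prefix_sum w j.+1) = w s.
Proof.
move=> w_sum0; pose P j := prefix_sum w j.+1.
rewrite sumrB (sum_nat_eq_mul _ _ P) (sum_nat_eqS_mul _ _ P) /P.
have -> : ((0 < s)%N && (s.-1 < n.-1)%N)%:R * prefix_sum w s.-1.+1 = prefix_sum w s.
  case: (posnP s) => [->|s_gt0]; first by rewrite mul0r prefix_sum0.
  have -> : (s.-1 < n.-1)%N by have := ltn_ord s; lia.
  by rewrite mul1r prednK.
case: (ltnP s n.-1) => s_last.
  by rewrite mul1r prefix_sumS addrAC subrr add0r.
have sSn : s.+1 = n by have := ltn_ord s; lia.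
have := prefix_sumS w s; rewrite sSn prefix_sum_all w_sum0 mul0r add0r; lra.
Qed.

End PrefixSums.

Section ContinuityEquation.
Variable R : realType.

(* For both boundary conditions the block acts as a backward difference. *)
Lemma DMblock_prefix_sum n kappa (w : 'I_n -> R) (s : 'I_n) :
  (1 < n)%N -> (kappa <= 1)%N -> \sum_i w i = 0 ->
  \sum_(j < n - kappa) DMblock R n kappa s j * (prefix_sum w (j + kappa) / n%:R) = w s.
Proof.
move=> n_gt1 kappa_le1 w_sum0; rewrite -[RHS](sum_diff_prefix_sum s w_sum0).
have n_neq0 : n%:R != 0 :> R by rewrite pnatr_eq0 -lt0n ltnW.
pose F j := (if kappa == 1%N then - D_e R n j s else Dper_e R n j s)
            * (prefix_sum w (j + kappa) / n%:R).
rewrite (eq_bigr (fun j => F (val j))) => [|j _]; last by rewrite mxE.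
rewrite -(big_mkord xpredT F) -(big_mkord xpredT (fun j =>
  (s == j :> nat)%:R * prefix_sum w j.+1 - (s == j.+1 :> nat)%:R * prefix_sum w j.+1)).
case: kappa kappa_le1 @F => [|[|//]] _ F.
- rewrite subn0 big_ltn ?(ltnW n_gt1) // big_add1 /F addn0 prefix_sum0 mul0r mulr0 add0r.
  apply: eq_bigr => j _; rewrite addn0 /Dper_e /=.
  by rewrite mulrAC mulrCA mulfV // mulr1 mulrC mulrBl.
- rewrite subn1; apply: eq_bigr => j _; rewrite /F addn1 /D_e /=.
  by rewrite mulNr mulrAC mulrCA mulfV // mulr1; ring.
Qed.

Section Momentum.
Variables (n p kappa : nat).
Hypotheses (n_gt1 : (1 < n)%N) (kappa_le1 : (kappa <= 1)%N).

Definition momentum (r : 'cV[R]_(p * n)) : 'cV[R]_(p * (n - kappa)) :=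
  \col_k (prefix_sum (fun s => r (mxvec_index (unpair k).1 s) 0) ((unpair k).2 + kappa)
          / n%:R).

Lemma mul_DM_momentum (r : 'cV[R]_(p * n)) :
  (forall t, \sum_s r (mxvec_index t s) 0 = 0) -> D_M R n p kappa *m momentum r = r.
Proof.
move=> r_sum0; apply/matrixP => k y; rewrite ord1; case/mxvec_indexP: k => t s.
rewrite mul_kron_mxE -[RHS](DMblock_prefix_sum s n_gt1 kappa_le1 (r_sum0 t)).
rewrite -[RHS](sum_eq_mul t (fun t' => \sum_(j < n - kappa) DMblock R n kappa s j *
  (prefix_sum (fun s => r (mxvec_index t' s) 0) (j + kappa) / n%:R))).
apply: eq_bigr => t' _; rewrite mulr_sumr; apply: eq_bigr => j _.
by rewrite /momentum !mxE unpair_mxvec_index /= -mulrA.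
Qed.

End Momentum.
End ContinuityEquation.
Arguments momentum {R} n p kappa r.

Section TimeOperators.
Variables (R : realType) (n p : nat).

Definition has_next (t : nat) : R := (t < p.-1)%N%:R.
Definition has_prev (t : nat) : R := ((0 < t)%N && (t.-1 < p.-1)%N)%:R.

Lemma mul_DF_const (c : R) (t : 'I_p) (s : 'I_n) :
  (D_F R n p *m (const_mx c : 'cV_(p.-1 * n))) (mxvec_index t s) 0 =
  p%:R * c * (has_next t - has_prev t).
Proof.
rewrite mul_kron_mxE (eq_bigr (fun t' : 'I_p.-1 =>
  (t == t' :> nat)%:R * (p%:R * c) - (t == t'.+1 :> nat)%:R * (p%:R * c))) => [|t' _].
  rewrite sumrB (sum_nat_eq_mul _ _ (fun=> p%:R * c)).
  by rewrite (sum_nat_eqS_mul _ _ (fun=> p%:R * c)); ring.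
rewrite (eq_bigr (fun s' => (s == s')%:R * ((- (D_p R p)^T) t t' * c))) => [|s' _].
  by rewrite sum_eq_mul !mxE /D_e; ring.
by rewrite !mxE; ring.
Qed.

Lemma mul_SF_const (c : R) (t : 'I_p) (s : 'I_n) :
  (S_F R n p *m (const_mx c : 'cV_(p.-1 * n))) (mxvec_index t s) 0 =
  c / 2 * (has_next t + has_prev t).
Proof.
rewrite mul_kron_mxE (eq_bigr (fun t' : 'I_p.-1 =>
  (t == t' :> nat)%:R * (c / 2) + (t == t'.+1 :> nat)%:R * (c / 2))) => [|t' _].
  rewrite big_split /= (sum_nat_eq_mul _ _ (fun=> c / 2)).
  by rewrite (sum_nat_eqS_mul _ _ (fun=> c / 2)); field.
rewrite (eq_bigr (fun s' => (s == s')%:R * (((S_p R p)^T) t t' * c))) => [|s' _].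
  by rewrite sum_eq_mul !mxE /S_e; field.
by rewrite !mxE; ring.
Qed.

Hypothesis p_gt1 : (1 < p)%N.

Lemma has_next_sub_prev (t : 'I_p) :
  has_next t - has_prev t = (t == 0 :> nat)%:R - (t == p.-1 :> nat)%:R.
Proof.
have t_lt := ltn_ord t; rewrite /has_next /has_prev.
have [-> /=|t_gt0] := posnP t.
  have p1_gt0 : (0 < p.-1)%N by lia.
  by rewrite p1_gt0 eq_sym (negbTE (lt0n_neq0 p1_gt0)).
have -> : (t.-1 < p.-1)%N by lia.
case: (ltnP t p.-1) => [t_lt1|t_ge1] /=.
  by rewrite ltn_eqF // subrr subr0.
have -> : t = p.-1 :> nat by lia.
by rewrite eqxx.
Qed.

Lemma has_next_add_prev_ge1 (t : 'I_p) : 1 <= has_next t + has_prev t.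
Proof.
rewrite /has_next /has_prev; case: (ltnP t p.-1) => [_|t_ge1].
  by rewrite lerDl ler0n.
have -> : ((0 < t)%N && (t.-1 < p.-1)%N) by apply/andP; have := ltn_ord t; lia.
by rewrite add0r.
Qed.

End TimeOperators.

Section BoundaryData.
Variables (R : realType) (n p : nat) (f0 f1 : 'I_n -> R).

Lemma fb_plusE t s : fb_plus R n p f0 f1 (mxvec_index t s) 0 =
  if t == 0 :> nat then f0 s / 2 else if t == p.-1 :> nat then f1 s / 2 else 0.
Proof. by rewrite !mxE mxvecE mxE. Qed.

Lemma fb_minusE t s : fb_minus R n p f0 f1 (mxvec_index t s) 0 =
  if t == 0 :> nat then p%:R * f0 s else if t == p.-1 :> nat then p%:R * - f1 s else 0.
Proof. by rewrite !mxE mxvecE mxE. Qed.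

Hypotheses (f0_ge0 : forall i, 0 <= f0 i) (f1_ge0 : forall i, 0 <= f1 i).

Lemma fb_plus_ge0 k : 0 <= fb_plus R n p f0 f1 k 0.
Proof.
case/mxvec_indexP: k => t s; rewrite fb_plusE.
by case: ifP => _; [|case: ifP => _]; rewrite ?divr_ge0.
Qed.

End BoundaryData.

Section FeasiblePoint.
Variables (R : realType) (n p kappa : nat) (f0 f1 : 'I_n -> R).
Hypotheses (n_gt1 : (1 < n)%N) (p_gt1 : (1 < p)%N) (kappa_le1 : (kappa <= 1)%N).
Hypothesis mass_eq : \sum_i f0 i = \sum_i f1 i.

Let c : R := (\sum_i f0 i) / n%:R.
Let g : 'cV[R]_(p.-1 * n) := const_mx c.
Let r : 'cV[R]_(p * n) := fb_minus R n p f0 f1 - D_F R n p *m g.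

Lemma residual_sum0 (t : 'I_p) : \sum_s r (mxvec_index t s) 0 = 0.
Proof.
pose e0 : R := (t == 0 :> nat)%:R; pose e1 : R := (t == p.-1 :> nat)%:R.
have rE s :
    r (mxvec_index t s) 0 = p%:R * (e0 * f0 s - e1 * f1 s) - p%:R * c * (e0 - e1).
  have -> : r (mxvec_index t s) 0 =
      fb_minus R n p f0 f1 (mxvec_index t s) 0 - (D_F R n p *m g) (mxvec_index t s) 0.
    by rewrite !mxE.
  rewrite fb_minusE mul_DF_const has_next_sub_prev // /e0 /e1.
  have [t0|t_neq0] := eqVneq (t : nat) 0%N.
    by rewrite t0 /= eq_sym (negbTE (lt0n_neq0 _)) /=; [ring | lia].
  by case: eqP => _ /=; ring.
rewrite (eq_bigr _ (fun s _ => rE s)) sumrB sumr_const card_ord -mulr_sumr sumrB.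
rewrite -!mulr_sumr -mass_eq -mulr_natr /c.
by field; rewrite pnatr_eq0 -lt0n ltnW.
Qed.

Lemma feasible_uniform_density :
  feasible R n p kappa f0 f1 (momentum n p kappa r) g.
Proof. by rewrite /feasible mul_DM_momentum ?subrK //; exact: residual_sum0. Qed.

Hypotheses (f0_ge0 : forall i, 0 <= f0 i) (f1_ge0 : forall i, 0 <= f1 i).

Lemma exists_feasible_Jdom : exists m (g : 'cV[R]_(p.-1 * n)),
  feasible R n p kappa f0 f1 m g /\
  forall k, Jdom ((S_M R n p kappa *m m) k ord0)
                 ((S_F R n p *m g + fb_plus R n p f0 f1) k ord0).
Proof.
have [mass0|mass_neq0] := eqVneq (\sum_i f0 i) 0.
  have f0_eq0 i : f0 i = 0 by apply: (psumr_eq0P (fun i _ => f0_ge0 i) mass0).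
  have mass1 : \sum_i f1 i = 0 by rewrite -mass_eq.
  have f1_eq0 i : f1 i = 0 by apply: (psumr_eq0P (fun i _ => f1_ge0 i) mass1).
  exists 0, 0; split => [|k]; rewrite /feasible !mulmx0 ?add0r.
    apply/matrixP => k y; rewrite ord1; case/mxvec_indexP: k => t s.
    by rewrite fb_minusE f0_eq0 f1_eq0 mxE oppr0 mulr0; case: ifP => //; case: ifP.
  apply/orP; right; rewrite mxE eqxx /=.
  case/mxvec_indexP: k => t s.
  by rewrite fb_plusE f0_eq0 f1_eq0 mul0r; case: ifP => //; case: ifP.
have c_gt0 : 0 < c.
  by rewrite divr_gt0 ?ltr0n ?(ltnW n_gt1) // lt_def mass_neq0 sumr_ge0.
exists (momentum n p kappa r), g; split => [|k]; first exact: feasible_uniform_density.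
apply/orP; left; case/mxvec_indexP: k => t s; rewrite mxE mul_SF_const.
have := @fb_plus_ge0 _ _ p _ _ f0_ge0 f1_ge0 (mxvec_index t s).
have : 0 < c / 2 * (has_next R p t + has_prev R p t).
  apply: mulr_gt0; first exact: divr_gt0.
  exact: lt_le_trans ltr01 (has_next_add_prev_ge1 _ p_gt1 t).
lra.
Qed.

End FeasiblePoint.

Section Minimizers.
Variables (R : realType) (n p kappa : nat) (f0 f1 : 'I_n -> R).
Local Notation U m k := ((S_M R n p kappa *m m) k ord0).
Local Notation V g k := ((S_F R n p *m g + fb_plus R n p f0 f1) k ord0).
Local Notation feasible := (feasible R n p kappa f0 f1).
Local Notation objective := (objective R n p kappa f0 f1).
Implicit Types (m : 'cV[R]_(p * (n - kappa))) (g : 'cV[R]_(p.-1 * n)).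

Lemma objective_Jdom m g : (forall k, Jdom (U m k) (V g k)) ->
  objective m g = (\sum_k Jval (U m k) (V g k))%:E.
Proof. exact: sum_Jfun_dom. Qed.

Lemma minimizer_Jdom m g :
  (exists m' g', feasible m' g' /\ forall k, Jdom (U m' k) (V g' k)) ->
  is_minimizer R n p kappa f0 f1 m g -> forall k, Jdom (U m k) (V g k).
Proof.
move=> [m' [g' [F' dom']]] [_ min] k; apply/negPn/negP => Nk.
have := min m' g' F'.
rewrite (objective_Jdom dom') /objective.
by rewrite (sum_Jfun_oo (u := fun k => U m k) (v := fun k => V g k) Nk) leye_eq.
Qed.

Lemma minimizer_objective_eq m1 g1 m2 g2 :
  is_minimizer R n p kappa f0 f1 m1 g1 -> is_minimizer R n p kappa f0 f1 m2 g2 ->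
  objective m1 g1 = objective m2 g2.
Proof. by move=> [F1 min1] [F2 min2]; apply/le_anti; rewrite min1 ?min2. Qed.

Lemma feasible_midpoint m1 g1 m2 g2 : feasible m1 g1 -> feasible m2 g2 ->
  feasible (2^-1 *: (m1 + m2)) (2^-1 *: (g1 + g2)).
Proof.
rewrite /feasible -!scalemxAr !mulmxDr -scalerDr addrACA => -> ->.
have half : 2^-1 + 2^-1 = 1 :> R by field.
by rewrite scalerDr -scalerDl half scale1r.
Qed.

Lemma objective_midpoint m1 g1 m2 g2 :
  objective (2^-1 *: (m1 + m2)) (2^-1 *: (g1 + g2)) =
  (\sum_k Jfun R ((U m1 k + U m2 k) / 2) ((V g1 k + V g2 k) / 2))%E.
Proof.
apply: eq_bigr => k _; rewrite -!scalemxAr !mulmxDr !mxE.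
by congr Jfun; [exact: mulrC | lra].
Qed.

End Minimizers.

Theorem lemma1 (R : realType) (n p kappa : nat) (f0 f1 : 'I_n -> R)
  (hn : (2 <= n)%N) (hp : (2 <= p)%N) (hk : (kappa <= 1)%N)
  (hf0 : forall i, 0 <= f0 i) (hf1 : forall i, 0 <= f1 i)
  (hmass : \sum_i `|f0 i| = \sum_i `|f1 i|)
  (m1 m2 : 'cV[R]_(p * (n - kappa))) (g1 g2 : 'cV[R]_(p.-1 * n)) :
  is_minimizer R n p kappa f0 f1 m1 g1 ->
  is_minimizer R n p kappa f0 f1 m2 g2 ->
  forall i : 'I_(p * n),
    0 < (S_F R n p *m g1 + fb_plus R n p f0 f1) i ord0 ->
    0 < (S_F R n p *m g2 + fb_plus R n p f0 f1) i ord0 ->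
    (S_M R n p kappa *m m1) i ord0 / (S_F R n p *m g1 + fb_plus R n p f0 f1) i ord0 =
    (S_M R n p kappa *m m2) i ord0 / (S_F R n p *m g2 + fb_plus R n p f0 f1) i ord0.
Proof.
move=> min1 min2 i v1_gt0 v2_gt0.
have mass_eq : \sum_i f0 i = \sum_i f1 i.
  rewrite -(eq_bigr _ (fun i _ => ger0_norm (hf0 i))) hmass.
  by apply: eq_bigr => j _; rewrite ger0_norm.
have witness := exists_feasible_Jdom hn hp hk mass_eq hf0 hf1.
have dom1 := minimizer_Jdom witness min1; have dom2 := minimizer_Jdom witness min2.
have := minimizer_objective_eq min1 min2; rewrite !objective_Jdom // => -[J12].
case: min1 min2 => [F1 min1] [F2 min2].
have := min1 _ _ (feasible_midpoint F1 F2).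
rewrite objective_midpoint sum_Jfun_dom => [|k]; last exact: Jdom_midpoint.
rewrite objective_Jdom // lee_fin => le_mid.
apply/eqP/negPn/negP => neq.
have := sum_Jval_midpoint_lt dom1 dom2 v1_gt0 v2_gt0 neq.
by rewrite -J12 mulrDl -splitr => /lt_le_trans/(_ le_mid); rewrite ltxx.
Qed.
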